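(* Let $\mathbf d=(d_1,\dots,d_n)$ be a graphical degree sequence with $n$ even. Then $\overline{\mu}(\mathbf d)>0$ if and only if $(d_1-1,\dots,d_n-1)$ is also graphical.
   Context: All graphs are finite and simple. A sequence of nonnegative integers $(d_1,\dots,d_n)$ is graphical if some simple graph on $\{v_1,\dots,v_n\}$ has $d(v_i)=d_i$ for all $i$ (it realizes the sequence); a sequence with a negative entry is not graphical. For a graph $G=(V,E)$ on $n$ vertices, a fractional vertex cover is a function $f:V\to[0,\infty)$ with $f(u)+f(v)\ge 1$ for every edge $uv\in E$; $\tau^*(G)$ denotes the minimum of $\sum_{v\in V}f(v)$ over all fractional vertex covers. For $E'\subseteq E$ let $G-E'=(V,E\setminus E')$, and $\mu(G)=\min\{|E'| : E'\subseteq E,\ \tau^*(G-E')<n/2\}$. $\overline{\mu}(\mathbf d)$ is the maximum of $\mu(G)$ over all graphs realizing $\mathbf d$. *)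

From HB Require Import structures.
From mathcomp Require Import all_boot all_order all_algebra.
From mathcomp Require Import classical_sets reals.
Set Implicit Arguments. Unset Strict Implicit. Unset Printing Implicit Defensive.
Import Order.TTheory GRing.Theory Num.Theory.

(* A graph on vertex set 'I_n is given by its edge set: a set of
   2-element subsets of 'I_n (finite, simple). *)
Definition simple_graph (n : nat) (E : {set {set 'I_n}}) : bool :=
  [forall e in E, #|e| == 2].

Definition deg (n : nat) (E : {set {set 'I_n}}) (v : 'I_n) : nat :=
  #|[set e in E | v \in e]|.

Definition realizes (n : nat) (E : {set {set 'I_n}}) (d : 'I_n -> nat) : bool :=
  simple_graph E && [forall v, deg E v == d v].

Definition graphical (n : nat) (d : 'I_n -> nat) : Prop :=
  exists E : {set {set 'I_n}}, realizes E d.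

(* integer sequences: a sequence with a negative entry is not graphical *)
Definition graphicalZ (n : nat) (d : 'I_n -> int) : Prop :=
  (forall v, (0 <= d v)%R) /\ graphical (fun v => `|d v|%N).

Local Open Scope ring_scope.

Definition frac_cover (R : realType) (n : nat) (E : {set {set 'I_n}})
  (f : 'I_n -> R) : Prop :=
  (forall v, 0 <= f v) /\ (forall u v, [set u; v] \in E -> 1 <= f u + f v).

(* tau^*(G) = min of sum f over fractional covers (written as the infimum,
   which is attained) *)
Definition tau_star (R : realType) (n : nat) (E : {set {set 'I_n}}) : R :=
  inf [set s : R | exists f : 'I_n -> R, frac_cover E f /\ s = \sum_(v < n) f v].

(* mu(G) = min { |E'| : E' subset E, tau^*(G - E') < n/2 }.
   The default #|E|.+1 is only used when no such E' exists (only for n = 0),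
   playing the role of min(empty) = +infinity. *)
Definition mu (R : realType) (n : nat) (E : {set {set 'I_n}}) : nat :=
  \big[minn/#|E|.+1]_(E' : {set {set 'I_n}} |
      (E' \subset E) && (tau_star R (E :\: E') < n%:R / 2)) #|E'|.

Definition mu_bar (R : realType) (n : nat) (d : 'I_n -> nat) : nat :=
  \max_(E : {set {set 'I_n}} | realizes E d) mu R E.

(* If d - 1 is realized by H and d by G, switches along alternating
   G \ H, H \ G paths move H inside G without changing any degree; then
   G \ H is a perfect matching of a realization of d, and a perfect matching
   forces tau* >= n/2, i.e. mu > 0.
   Conversely, if tau*(G) >= n/2 then the cover (1 + [N(X)] - [X])/2 shows
   |N(X)| >= |X| for every X, so Hall's theorem gives a permutation s with
   x ~ s x for all x: a spanning union of edges and cycles of G.  Deleting two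
   vertices v, w of this structure (the ends of an edge, two consecutive
   vertices of a longer cycle, or, when all cycles are triangles, vertices of
   two of them, which exist as n is even) and rewiring at most three edges
   among the others gives a smaller instance; a realization of (deg - 1)
   there, plus the edges of G at v or w minus one at each, realizes d - 1. *)

From mathcomp Require Import all_boot all_order all_algebra.
From mathcomp Require Import classical_sets reals.
(* Re-imported so that set0, subsetP, ... are those of finset, not of classical_sets. *)
From mathcomp Require Import fintype finset perm.
From mathcomp Require Import zify lra.
Set Implicit Arguments. Unset Strict Implicit. Unset Printing Implicit Defensive.
Import Order.TTheory GRing.Theory Num.Theory.

Section Degrees.
Variable n : nat.
Implicit Types (E F D A : {set {set 'I_n}}) (e : {set 'I_n}) (u v x y a b : 'I_n).

Lemma deg_setU E F v : {in E, forall e, e \notin F} ->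
  deg (E :|: F) v = deg E v + deg F v.
Proof.
move=> EF; rewrite /deg -cardsUI.
have -> : [set e in E | v \in e] :&: [set e in F | v \in e] = set0.
  apply/setP=> e; rewrite !inE; case eE: (e \in E) => //=.
  by rewrite (negbTE (EF e eE)) andbF.
by rewrite cards0 addn0; apply: eq_card => e; rewrite !inE andb_orl.
Qed.

Lemma deg_setD_sub E F v : F \subset E -> deg (E :\: F) v + deg F v = deg E v.
Proof.
move=> FE; rewrite -deg_setU; last by move=> e; rewrite inE => /andP[].
congr deg; apply/setP=> e; rewrite !inE.
by case: (boolP (e \in F)) => [/(subsetP FE) ->|]; rewrite ?orbT ?orbF.
Qed.

Lemma deg_exchange E D A v : D \subset E -> {in A, forall e, e \notin E} ->
  deg ((E :\: D) :|: A) v + deg D v = deg E v + deg A v.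
Proof.
move=> DE AE; rewrite deg_setU -?(deg_setD_sub v DE); first lia.
by move=> e; rewrite inE => /andP[_ eE]; apply: contraTN eE => /AE.
Qed.

Lemma deg_sep E (P : pred {set 'I_n}) v :
  deg [set e in E | P e] v + deg [set e in E | ~~ P e] v = deg E v.
Proof.
rewrite -deg_setU; last by move=> e; rewrite !inE => /andP[_ ->]; rewrite andbF.
by congr deg; apply/setP=> e; rewrite !inE -andb_orr orbN andbT.
Qed.

Lemma deg_setID E F v : deg (E :&: F) v + deg (E :\: F) v = deg E v.
Proof.
rewrite -(deg_sep E (mem F)); congr (deg _ _ + deg _ _);
  by apply/setP=> e; rewrite !inE andbC.
Qed.

Lemma deg_eq0 E v : {in E, forall e, v \notin e} -> deg E v = 0.
Proof.
move=> vE; apply/eqP; rewrite cards_eq0; apply/eqP/setP=> e; rewrite !inE.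
by apply/negP=> /andP[/vE /negP].
Qed.

Lemma deg_set1 e v : deg [set e] v = (v \in e : nat).
Proof.
case: (boolP (v \in e)) => ve; last by rewrite deg_eq0 // => f; rewrite inE => /eqP ->.
by apply/eqP/cards1P; exists e; apply/setP=> f; rewrite !inE andb_idr // => /eqP ->.
Qed.

Lemma deg_set2 e1 e2 v : e1 != e2 -> deg [set e1; e2] v = (v \in e1) + (v \in e2).
Proof.
move=> e12; rewrite deg_setU ?deg_set1 // => f; rewrite !inE => /eqP ->.
exact: e12.
Qed.

Lemma deg_gt0 E v : 0 < deg E v -> exists2 e, e \in E & v \in e.
Proof. by rewrite card_gt0 => /set0Pn[e]; rewrite inE => /andP[]; exists e. Qed.

Lemma pair_neq x a y b : x != y -> x != b -> [set x; a] != [set y; b].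
Proof.
by move=> xy xb; apply/negP=> /eqP/setP/(_ x); rewrite !inE eqxx (negbTE xy) (negbTE xb).
Qed.

Lemma simple_graphS E F : E \subset F -> simple_graph F -> simple_graph E.
Proof.
by move=> EF /forall_inP sF; apply/forall_inP=> e eE; apply/sF/(subsetP EF).
Qed.

Lemma simple_graphU E F : simple_graph E -> simple_graph F -> simple_graph (E :|: F).
Proof.
move=> /forall_inP sE /forall_inP sF; apply/forall_inP=> e.
by rewrite inE => /orP[/sE|/sF].
Qed.

Lemma simple_graph1 u v : u != v -> simple_graph [set [set u; v]].
Proof. by move=> uv; apply/forall_inP=> e; rewrite inE => /eqP ->; rewrite cards2 uv. Qed.

Lemma simple_graph2 u v x y : u != v -> x != y ->
  simple_graph [set [set u; v]; [set x; y]].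
Proof. by move=> uv xy; rewrite simple_graphU ?simple_graph1. Qed.

Lemma simple_edge_neq E u v : simple_graph E -> [set u; v] \in E -> u != v.
Proof.
by move=> /forall_inP sE /sE; apply: contraTneq => ->; rewrite setUid cards1.
Qed.

Lemma simple_edgeP E e x : simple_graph E -> e \in E -> x \in e ->
  exists2 y, x != y & e = [set x; y].
Proof.
move=> /forall_inP sE /sE /cards2P[a [b [ab ->]]].
by rewrite !inE => /orP[] /eqP ->; [exists b | exists a; rewrite 1?eq_sym // setUC].
Qed.

Definition nbhd E v := [set u | [set v; u] \in E].

Lemma deg_nbhd E v : simple_graph E -> deg E v = #|nbhd E v|.
Proof.
move=> sE; rewrite /deg.
have -> : [set e in E | v \in e] = [set [set v; u] | u in nbhd E v].
  apply/setP=> e; rewrite !inE; apply/andP/imsetP.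
  - by case=> eE /(simple_edgeP sE eE) [u _ ee]; exists u; rewrite // inE -ee.
  - by case=> u; rewrite inE => uE ->; rewrite uE !inE eqxx.
rewrite card_in_imset // => u u'; rewrite !inE => uE _ /setP /(_ u).
rewrite !inE eqxx orbT eq_sym (negbTE (simple_edge_neq sE uE)) /=.
by move/esym/eqP.
Qed.

End Degrees.

Section Switching.
Variable n : nat.
Implicit Types (E G H K R : {set {set 'I_n}}) (v x y a b : 'I_n).

Definition switch E x a y b :=
  (E :\: [set [set x; a]; [set y; b]]) :|: [set [set x; y]; [set a; b]].

Lemma mem_pair_swap v x a y b : x != a -> x != y -> x != b -> a != b -> y != b ->
  (v \in [set x; a]) + (v \in [set y; b]) = (v \in [set x; y]) + (v \in [set a; b]).
Proof.
move=> xa xy xb ab yb; rewrite !inE.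
case: (eqVneq v x) => [vx|vx]; case: (eqVneq v a) => [va|va];
case: (eqVneq v y) => [vy|vy]; case: (eqVneq v b) => [vb|vb] //=;
by subst; rewrite ?eqxx in xa xy xb ab yb.
Qed.

Lemma deg_switch E x a y b v : x != a -> x != y -> x != b -> a != b -> y != b ->
  [set x; a] \in E -> [set y; b] \in E -> [set x; y] \notin E -> [set a; b] \notin E ->
  deg (switch E x a y b) v = deg E v.
Proof.
move=> xa xy xb ab yb xaE ybE xyE abE.
have DE : [set [set x; a]; [set y; b]] \subset E by rewrite subUset !sub1set xaE.
have AE : {in [set [set x; y]; [set a; b]], forall e, e \notin E}.
  by move=> e; rewrite !inE => /orP[] /eqP ->.
have := deg_exchange v DE AE; rewrite !deg_set2 ?pair_neq // mem_pair_swap //.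
by move/addIn.
Qed.

Lemma simple_switch E x a y b : x != y -> a != b ->
  simple_graph E -> simple_graph (switch E x a y b).
Proof.
by move=> xy ab sE; rewrite simple_graphU ?simple_graph2 // (simple_graphS _ sE) ?subsetDl.
Qed.

Lemma switch_closer G H x y a b : simple_graph G -> simple_graph H ->
  [set x; y] \in H :\: G -> [set y; b] \in G :\: H -> [set x; a] \in G :\: H ->
  [set a; b] \notin G :\: H -> a != b -> x != b ->
  exists G' H', [/\ simple_graph G', simple_graph H', deg G' =1 deg G,
    deg H' =1 deg H & #|H' :\: G'| < #|H :\: G|].
Proof.
move=> sG sH xyHG ybGH xaGH abGH ab xb.
move: (xyHG) (ybGH) (xaGH); rewrite !inE => /andP[xyG xyH] /andP[ybH ybG] /andP[xaH xaG].
have xy := simple_edge_neq sH xyH; have yb := simple_edge_neq sG ybG.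
have xa := simple_edge_neq sG xaG.
have ltHG K : K \subset (H :\: G) :\ [set x; y] -> #|K| < #|H :\: G|.
  move=> KHG; apply: leq_ltn_trans (subset_leq_card KHG) _.
  by rewrite [X in _ < X](cardsD1 [set x; y]) xyHG.
case: (boolP ([set a; b] \in G)) => abG.
- have abH : [set a; b] \in H by move: abGH; rewrite !inE abG andbT negbK.
  exists G, (switch H x y a b); split=> //.
  + exact: simple_switch.
  + by move=> v; apply: deg_switch.
  apply: ltHG; apply/subsetP=> f; rewrite !inE.
  case/andP=> fG /or3P[/andP[/norP[fxy _] fH] | /eqP fe | /eqP fe].
  + by rewrite fxy fG fH.
  + by rewrite fe xaG in fG.
  + by rewrite fe ybG in fG.
- exists (switch G x a y b), H; split=> //.
  + exact: simple_switch.
  + by move=> v; apply: deg_switch; rewrite // !inE abG.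
  apply: ltHG; apply/subsetP=> f; rewrite !inE => /andP[fS fH].
  have fxa : f != [set x; a] by apply: contraTneq fH => ->.
  have fyb : f != [set y; b] by apply: contraTneq fH => ->.
  by move: fS; rewrite (negbTE fxa) (negbTE fyb) fH /= !negb_or andbT => /and3P[-> ->].
Qed.

Lemma deg_lt_nbhd_closed R x y b : simple_graph R -> x != y ->
  [set y; b] \in R -> [set x; y] \notin R ->
  {in nbhd R x, forall a, a != b -> [set a; b] \in R} -> deg R x < deg R b.
Proof.
move=> sR xy ybR xyR closed; rewrite !(deg_nbhd _ sR); set N := nbhd R x.
have yN : y \notin N by rewrite inE.
have xN : x \notin N by rewrite inE; apply/negP=> /(simple_edge_neq sR); rewrite eqxx.
have yNb : y \in nbhd R b by rewrite inE setUC.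
have NNb z : z \in N -> z != b -> z \in nbhd R b by move=> zN zb; rewrite inE setUC closed.
case: (boolP (b \in N)) => bN.
- have sub : x |: (y |: (N :\ b)) \subset nbhd R b.
    apply/subsetP=> z; rewrite !in_setU1 in_setD1.
    case/or3P=> [/eqP -> | /eqP -> // | /andP[zb zN]]; last exact: NNb.
    by move: bN; rewrite !inE setUC.
  apply: leq_trans (subset_leq_card sub); rewrite !cardsU1 !in_setU1 !in_setD1.
  rewrite (negbTE xN) (negbTE yN) !andbF orbF (cardsD1 b N) bN.
  by rewrite xy.
- have sub : y |: N \subset nbhd R b.
    apply/subsetP=> z; rewrite in_setU1 => /orP[/eqP -> // | zN].
    have zb : z != b by apply: contraTneq zN => ->.
    exact: NNb.
  by apply: leq_trans (subset_leq_card sub); rewrite cardsU1 yN.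
Qed.

Lemma closer_realizations G H : simple_graph G -> simple_graph H ->
  (forall v, deg G v = (deg H v).+1) -> ~~ (H \subset G) ->
  exists G' H', [/\ simple_graph G', simple_graph H', deg G' =1 deg G,
    deg H' =1 deg H & #|H' :\: G'| < #|H :\: G|].
Proof.
move=> sG sH dGH /subsetPn[e0 e0H e0G].
set R := G :\: H; have sR : simple_graph R := simple_graphS (subsetDl _ _) sG.
have dR v : deg R v = (deg (H :\: G) v).+1.
  by have := deg_setID G H v; have := deg_setID H G v; rewrite /R setIC dGH; lia.
have [x0 x0e0] : exists x0, x0 \in e0.
  by apply/set0Pn; rewrite -card_gt0; have /forall_inP/(_ e0 e0H)/eqP-> := sH.
have Px0 : 0 < deg (H :\: G) x0.
  by rewrite card_gt0; apply/set0Pn; exists e0; rewrite !inE e0H e0G.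
(* x maximizes the degree in G \ H among the vertices of H \ G; if no switch
   is possible at x, the neighbour b found below would beat it. *)
case: (@arg_maxnP _ x0 (fun v => 0 < deg (H :\: G) v) (deg R) Px0) => x Px xmax.
have sHG : simple_graph (H :\: G) := simple_graphS (subsetDl _ _) sH.
have [e eHG xe] := deg_gt0 Px.
have [y xy exy] := simple_edgeP sHG eHG xe; rewrite {e xe}exy in eHG; rename eHG into xyHG.
have [e eR ye] : exists2 e, e \in R & y \in e by apply: deg_gt0; rewrite dR.
have [b yb eyb] := simple_edgeP sR eR ye; rewrite {e ye}eyb in eR; rename eR into ybR.
have xb : x != b.
  by apply: contraTneq ybR => <-; move: xyHG; rewrite !inE setUC => /andP[_ ->].
have xyR : [set x; y] \notin R.
  by move: xyHG; rewrite /R !inE => /andP[/negbTE -> _]; rewrite andbF.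
case: (boolP [exists a in nbhd R x, (a != b) && ([set a; b] \notin R)]).
  case/exists_inP=> a; rewrite inE => xaR /andP[ab abR].
  exact: (switch_closer sG sH xyHG ybR xaR abR ab xb).
move/exists_inPn=> closed; exfalso.
have lt_xb : deg R x < deg R b.
  apply: deg_lt_nbhd_closed xy ybR xyR _ => // a aN ab.
  by move: (closed a aN); rewrite ab negbK.
have Pb : 0 < deg (H :\: G) b by move: lt_xb; rewrite !dR ltnS; apply: leq_ltn_trans.
by have /= := xmax b Pb; rewrite leqNgt lt_xb.
Qed.

Lemma nested_realizations G H : simple_graph G -> simple_graph H ->
  (forall v, deg G v = (deg H v).+1) ->
  exists G' H', [/\ simple_graph G', simple_graph H', deg G' =1 deg G,
    deg H' =1 deg H & H' \subset G'].
Proof.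
move=> sG sH; have [k] := ubnP #|H :\: G|.
elim: k G H sG sH => // k IH G H sG sH ltk dGH.
have [HG | nHG] := boolP (H \subset G); first by exists G, H.
have [G1 [H1 [sG1 sH1 dG1 dH1 lt1]]] := closer_realizations sG sH dGH nHG.
have [|G2 [H2 [sG2 sH2 dG2 dH2 HG2]]] := IH G1 H1 sG1 sH1 (leq_trans lt1 ltk).
  by move=> v; rewrite dG1 dH1.
by exists G2, H2; split=> // v; [rewrite dG2 dG1 | rewrite dH2 dH1].
Qed.

End Switching.

Section Hall.
Variable T : finType.
Implicit Types (A B X Y : {set T}) (N : T -> {set T}) (f g : T -> T).

Definition hall_condition A N :=
  forall X, X \subset A -> #|X| <= #|\bigcup_(x in X) N x|.

Definition sdr A N f := {in A &, injective f} /\ {in A, forall x, f x \in N x}.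

Lemma sdr_glue A X N f g : sdr X N f -> sdr (A :\: X) N g ->
  {in X & A :\: X, forall x y, f x != g y} ->
  sdr A N (fun x => if x \in X then f x else g x).
Proof.
move=> [injf Nf] [injg Ng] fg; split=> [x y xA yA | x xA].
  case: (boolP (x \in X)) => xX; case: (boolP (y \in X)) => yX.
  - exact: injf.
  - by move=> fxgy; have := fg x y xX; rewrite inE yX yA fxgy eqxx => /(_ isT).
  - by move=> gxfy; have := fg y x yX; rewrite inE xX xA gxfy eqxx => /(_ isT).
  - by apply: injg; rewrite inE ?xX ?yX.
by case: (boolP (x \in X)) => xX; [apply: Nf | apply: Ng; rewrite inE xX].
Qed.

Lemma bigcup_setD X B N :
  \bigcup_(x in X) (N x :\: B) = (\bigcup_(x in X) N x) :\: B.
Proof.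
apply/setP=> z; rewrite inE; apply/bigcupP/andP.
- by case=> x xX; rewrite inE => /andP[zB zN]; split=> //; apply/bigcupP; exists x.
- by case=> zB /bigcupP[x xX zN]; exists x; rewrite // inE zB.
Qed.

Lemma hall_condition_tight A X N : hall_condition A N -> X \subset A ->
  #|\bigcup_(x in X) N x| <= #|X| ->
  hall_condition (A :\: X) (fun x => N x :\: \bigcup_(x in X) N x).
Proof.
move=> hallA XA tight Y YAX; set NX := \bigcup_(x in X) N x.
rewrite bigcup_setD.
have YX : [disjoint Y & X].
  by apply/pred0P=> z /=; apply/andP=> -[/(subsetP YAX)]; rewrite inE => /andP[/negP].
have := hallA (Y :|: X); rewrite subUset XA (subset_trans YAX (subsetDl _ _)).
rewrite bigcup_setU cardsU (disjoint_setI0 YX) cards0 subn0 => /(_ isT).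
rewrite cardsU cardsD setIC; set UY := \bigcup_(y in Y) N y.
have : #|NX :&: UY| <= #|UY| by apply/subset_leq_card/subsetIr.
by move: tight; rewrite -/NX; lia.
Qed.

Lemma hall_condition_surplus A N a b : a \in A ->
  (forall X, X \subset A -> X != set0 -> X != A -> #|X| < #|\bigcup_(x in X) N x|) ->
  hall_condition (A :\ a) (fun x => N x :\ b).
Proof.
move=> aA surplus Y YAa; rewrite bigcup_setD.
have [-> | Y0] := eqVneq Y set0; first by rewrite cards0.
have YA : Y \subset A := subset_trans YAa (subsetDl _ _).
have YnA : Y != A by apply: contraTneq YAa => ->; apply/subsetPn; exists a; rewrite ?inE ?eqxx.
have := surplus Y YA Y0 YnA; rewrite (cardsD1 b (\bigcup_(x in Y) N x)).
by case: (b \in _) => /=; lia.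
Qed.

Theorem hall A N : hall_condition A N -> exists f, sdr A N f.
Proof.
have [k] := ubnP #|A|; elim: k A N => // k IH A N ltA hallA.
have [-> | [a aA]] := set_0Vmem A; first by exists id; split=> x; rewrite inE.
have [tight | surplus] := boolP [exists X : {set T}, [&& X \subset A, X != set0, X != A &
                   #|\bigcup_(x in X) N x| <= #|X|]].
- have /existsP[X /and4P[XA X0 XnA NX]] := tight.
  have ltX : #|X| < #|A| by rewrite proper_card // properEneq XnA.
  have [f sdrf] : exists f, sdr X N f.
    apply: IH; first exact: leq_trans ltX ltA.
    by move=> Y YX; apply: hallA (subset_trans YX XA).
  have ltAX : #|A :\: X| < #|A|.
    by rewrite cardsDS //; move: ltX; rewrite -card_gt0 in X0; lia.
  have [g [injg Ng]] := IH _ _ (leq_trans ltAX ltA) (hall_condition_tight hallA XA NX).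
  exists (fun x => if x \in X then f x else g x); apply: sdr_glue => //.
    by split=> // x /Ng; rewrite inE => /andP[].
  move=> x y xX /Ng; rewrite inE => /andP[+ _]; apply: contraNneq => <-.
  by apply/bigcupP; exists x; last exact: sdrf.2.
have surplusA X : X \subset A -> X != set0 -> X != A ->
    #|X| < #|\bigcup_(x in X) N x|.
  by move=> XA X0 XnA; move/existsPn: surplus => /(_ X); rewrite XA X0 XnA ltnNge.
have [b Nab] : exists b, b \in N a.
  apply/set0Pn; rewrite -card_gt0; have := hallA [set a].
  by rewrite sub1set aA big_set1 cards1 => /(_ isT).
have ltAa : #|A :\ a| < k by move: ltA; rewrite (cardsD1 a A) aA.
have [g [injg Ng]] := IH _ _ ltAa (hall_condition_surplus b aA surplusA).
exists (fun x => if x \in [set a] then b else g x); apply: sdr_glue.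
- by split=> [x y /set1P-> /set1P-> | x /set1P->].
- by split=> // x /Ng; rewrite inE => /andP[].
- by move=> x y _ /Ng; rewrite !inE eq_sym => /andP[].
Qed.

End Hall.

Section Reduction.
Variable n : nat.
Implicit Types (W : {set 'I_n}) (G H A B D : {set {set 'I_n}}) (e : {set 'I_n}) (u v w x y : 'I_n).

Definition graph_on W G := {in G, forall e, e \subset W}.

Definition pred_realizable W G := exists H,
  [/\ simple_graph H, graph_on W H & {in W, forall x, (deg H x).+1 = deg G x}].

(* A perfect 2-matching of G on W, encoded by a permutation whose cycles are
   its components (2-cycles being single edges). *)
Definition perm_cover W G (s : {perm 'I_n}) := {in W, forall x, [set x; s x] \in G}.

Definition rem2 G v w := [set e in G | (v \notin e) && (w \notin e)].

Definition star2 G v w := [set e in G | (v \in e) || (w \in e)].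

Lemma deg_rem2_star2 G v w x : deg (rem2 G v w) x + deg (star2 G v w) x = deg G x.
Proof.
rewrite -(deg_sep G (fun e => (v \notin e) && (w \notin e))); congr (_ + deg _ _).
by apply/setP=> e; rewrite !inE negb_and !negbK.
Qed.

Lemma deg_rem2 G v w x : x \in [set v; w] -> deg (rem2 G v w) x = 0.
Proof. by rewrite !inE => /orP[] /eqP-> ; apply: deg_eq0 => e; rewrite inE => /and3P[]. Qed.

Lemma mem_rem2 G v w x y : [set x; y] \in G ->
  x != v -> x != w -> y != v -> y != w -> [set x; y] \in rem2 G v w.
Proof.
move=> xyG xv xw yv yw.
by rewrite inE xyG !inE !negb_or !(eq_sym v) !(eq_sym w) xv xw yv yw.
Qed.

Lemma graph_on_rem2 W G v w : graph_on W G -> graph_on (W :\ v :\ w) (rem2 G v w).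
Proof.
move=> oG e; rewrite inE => /and3P[eG ve we]; apply/subsetP=> x xe.
rewrite !inE (subsetP (oG _ eG) _ xe) andbT.
by apply/andP; split; [apply: contraNneq we | apply: contraNneq ve] => <-.
Qed.

(* D holds one edge at v and one at w; the graph on W :\ v :\ w gains A and
   loses B so as to keep, at every other vertex, the degree lost with D. *)
Lemma reduce_step W G v w D A B :
  simple_graph G -> graph_on W G ->
  D \subset star2 G v w -> deg D v = 1 -> deg D w = 1 ->
  {in A, forall e, e \notin G} -> B \subset rem2 G v w ->
  {in W :\ v :\ w, forall x, deg A x = deg B x + deg D x} ->
  pred_realizable (W :\ v :\ w) ((rem2 G v w :\: B) :|: A) -> pred_realizable W G.
Proof.
move=> sG oG DS dDv dDw AG BR dA [H [sH oH dH]].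
have SG : star2 G v w \subset G by apply/subsetP=> e; rewrite inE => /andP[].
have AR : {in A, forall e, e \notin rem2 G v w}.
  by move=> e /AG eG; rewrite inE (negbTE eG).
exists (H :|: (star2 G v w :\: D)); split.
- exact: simple_graphU sH (simple_graphS (subset_trans (subsetDl _ _) SG) sG).
- move=> e; rewrite inE => /orP[/oH eW | /setDP[/(subsetP SG) /oG //]].
  exact: subset_trans eW (subset_trans (subD1set _ _) (subD1set _ _)).
move=> x xW; rewrite deg_setU; last first.
  move=> e /oH /subsetP eW; apply/negP=> /setDP[+ _]; rewrite inE => /andP[_].
  by case/orP=> /eW; rewrite !inE eqxx /= ?andbF.
have dS := deg_setD_sub x DS; have dG := deg_rem2_star2 G v w x.
have [xW' | xvw] := boolP (x \in W :\ v :\ w).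
  have := dH x xW'; have := deg_exchange x BR AR; have := dA x xW'; lia.
have xvw' : x \in [set v; w] by move: xvw; rewrite !inE xW andbT -negb_or negbK orbC.
have dH0 : deg H x = 0.
  by apply: deg_eq0 => e eH; apply: contra xvw; apply/subsetP/oH.
rewrite dH0 deg_rem2 // in dG *.
by move: xvw'; rewrite !inE => /orP[] /eqP xe; rewrite xe in dS dG *; lia.
Qed.

Ltac distinct U := move: (U); apply: contraTneq => ->; rewrite /= !inE eqxx ?orbT ?andbF.

Section PermCover.
Variables (W : {set 'I_n}) (G : {set {set 'I_n}}) (s : {perm 'I_n}).
Hypotheses (sG : simple_graph G) (oG : graph_on W G) (sE : perm_cover W G s).
Hypothesis IH : forall v w G' (s' : {perm 'I_n}), v \in W -> w \in W -> v != w ->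
  simple_graph G' -> graph_on (W :\ v :\ w) G' -> perm_cover (W :\ v :\ w) G' s' ->
  pred_realizable (W :\ v :\ w) G'.

Lemma perm_cover_mem x : x \in W -> s x \in W.
Proof. by move=> xW; apply: (subsetP (oG (sE xW))); rewrite !inE eqxx orbT. Qed.

Lemma perm_cover_neq x : x \in W -> x != s x.
Proof. by move=> xW; apply: simple_edge_neq sG (sE xW). Qed.

Lemma perm_cover_rem2 v w y : y \in W -> y != v -> y != w -> s y != v -> s y != w ->
  [set y; s y] \in rem2 G v w.
Proof. by move=> yW; apply: mem_rem2 (sE yW). Qed.

Lemma reduce_by v w D A B s' : v \in W -> w \in W -> v != w ->
  D \subset star2 G v w -> deg D v = 1 -> deg D w = 1 ->
  simple_graph A -> graph_on (W :\ v :\ w) A -> {in A, forall e, e \notin G} ->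
  B \subset rem2 G v w -> {in W :\ v :\ w, forall x, deg A x = deg B x + deg D x} ->
  perm_cover (W :\ v :\ w) ((rem2 G v w :\: B) :|: A) s' -> pred_realizable W G.
Proof.
move=> vW wW vw DS dDv dDw sA oA AG BR dA cover.
apply: (reduce_step sG oG DS dDv dDw AG BR dA); apply: IH cover => //.
  apply: simple_graphU sA; apply: simple_graphS sG.
  by apply/subsetP=> e; rewrite !inE => /andP[_ /andP[]].
move=> e; rewrite inE => /orP[/setDP[eR _] | /oA //].
exact: graph_on_rem2 oG _ eR.
Qed.

Lemma reduce_by_edge v w s' : [set v; w] \in G ->
  perm_cover (W :\ v :\ w) (rem2 G v w) s' -> pred_realizable W G.
Proof.
move=> vwG cover; have /subsetP vwW := oG vwG.
have deg0 x : deg set0 x = 0 by apply: deg_eq0 => e; rewrite inE.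
apply: (@reduce_by v w [set [set v; w]] set0 set0 s').
- by apply: vwW; rewrite !inE eqxx.
- by apply: vwW; rewrite !inE eqxx orbT.
- exact: simple_edge_neq vwG.
- by rewrite sub1set inE vwG !inE eqxx.
- by rewrite deg_set1 !inE eqxx.
- by rewrite deg_set1 !inE eqxx orbT.
- by apply/forall_inP=> e; rewrite inE.
- by move=> e; rewrite inE.
- by move=> e; rewrite inE.
- exact: sub0set.
- by move=> x; rewrite !inE deg_set1 !deg0 !inE => /and3P[/negbTE-> /negbTE->].
- by rewrite setD0 setU0.
Qed.

Lemma reduce_2cycle x : x \in W -> s (s x) = x -> pred_realizable W G.
Proof.
move=> xW ssx; apply: (@reduce_by_edge x (s x) s (sE xW)) => y /setD1P[ysx /setD1P[yx yW]].
apply: perm_cover_rem2 => //; first by rewrite -ssx (inj_eq perm_inj).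
by rewrite (inj_eq perm_inj).
Qed.

(* On the cycle u -> v -> w -> z, delete v and w and let u jump to z. *)
Lemma reduce_long_cycle u : u \in W -> {in W, forall x, s (s x) != x} ->
  s (s (s u)) != u -> pred_realizable W G.
Proof.
move=> uW no2 s3u; set v := s u; set w := s v; set z := s w; rewrite -/z in s3u.
have vW : v \in W := perm_cover_mem uW; have wW : w \in W := perm_cover_mem vW.
have uv : u != v := perm_cover_neq uW; have vw : v != w := perm_cover_neq vW.
have wz : w != z := perm_cover_neq wW.
have uw : u != w by rewrite eq_sym no2.
have vz : v != z by rewrite eq_sym no2.
have uz : u != z by rewrite eq_sym.
pose s' := (tperm u w * s)%g.
have s'u : s' u = z by rewrite permM tpermL.
have cover_rem2 : {in W :\ v :\ w, forall y, y != u -> [set y; s' y] \in rem2 G v w}.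
  move=> y /setD1P[yw /setD1P[yv yW]] yu.
  rewrite permM tpermD 1?eq_sym //; apply: perm_cover_rem2 => //.
  - by rewrite /v (inj_eq perm_inj).
  - by rewrite /w (inj_eq perm_inj).
have uzR : [set u; z] \in G -> [set u; z] \in rem2 G v w.
  by move=> uzG; apply: mem_rem2; rewrite // eq_sym.
have [uzG | uzG] := boolP ([set u; z] \in G).
  apply: (@reduce_by_edge v w s' (sE vW)) => y yW.
  by have [-> | yu] := eqVneq y u; [rewrite s'u uzR | apply: cover_rem2].
apply: (@reduce_by v w [set [set u; v]; [set w; z]] [set [set u; z]] set0 s') => //.
- by rewrite subUset !sub1set !inE (sE uW) (sE wW) !eqxx !orbT.
- by rewrite deg_set2 ?pair_neq // !inE eqxx orbT (negbTE vw) (negbTE vz).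
- by rewrite deg_set2 ?pair_neq // !inE eqxx /= (eq_sym w u) (eq_sym w v) (negbTE uw) (negbTE vw).
- exact: simple_graph1.
- move=> e; rewrite inE => /eqP->; apply/subsetP=> x; rewrite !inE.
  case/orP=> /eqP->; first by rewrite uw uv uW.
  by rewrite eq_sym wz eq_sym vz /=; apply: perm_cover_mem.
- by move=> e; rewrite inE => /eqP->.
- exact: sub0set.
- move=> x /setD1P[xw /setD1P[xv _]].
  rewrite deg_set1 deg_set2 ?pair_neq // (deg_eq0 (E := set0)) => [|e]; last by rewrite inE.
  rewrite !inE (negbTE xv) (negbTE xw) orbF /=.
  by case: eqVneq => [->|]; rewrite ?(negbTE uz) //=; case: (x == z).
- move=> y yW; have [-> | yu] := eqVneq y u; first by rewrite s'u !inE eqxx orbT.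
  by rewrite setD0 inE cover_rem2.
Qed.

(* Triangles u v w and p q r joined by up: delete u and p, leaving the edges vw, qr. *)
Lemma reduce_triangles_edge u p : u \in W -> p \in W ->
  s (s (s u)) = u -> s (s (s p)) = p -> uniq [:: u; s u; s (s u); p; s p; s (s p)] ->
  [set u; p] \in G -> pred_realizable W G.
Proof.
move=> uW pW s3u s3p U upG.
set v := s u in U *; set w := s v in s3u U *; set q := s p in U *; set r := s q in s3p U *.
have vwG : [set v; w] \in G := sE (perm_cover_mem uW).
have qrG : [set q; r] \in G := sE (perm_cover_mem pW).
pose s' := (tperm w u * tperm r p * s)%g.
apply: (@reduce_by_edge u p s' upG) => y /setD1P[yp /setD1P[yu yW]].
rewrite /s' !permM.
have [-> | yw] := eqVneq y w.
  rewrite tpermL tpermD; try by distinct U.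
  by rewrite setUC -/v (mem_rem2 vwG) //; distinct U.
have [-> | yr] := eqVneq y r.
  rewrite [tperm w u r]tpermD ?tpermL; try by distinct U.
  by rewrite setUC -/q (mem_rem2 qrG) //; distinct U.
rewrite [tperm w u y]tpermD 1?eq_sym // tpermD 1?eq_sym //.
apply: perm_cover_rem2 => //.
  by rewrite -s3u (inj_eq perm_inj).
by rewrite -s3p (inj_eq perm_inj).
Qed.

(* Delete v and w: u enters the other triangle as the 4-cycle u q r p, with up
   and uq replacing pq. *)
Lemma triangles_apart_cover u v w p q r : u \in W -> p \in W ->
  s u = v -> s v = w -> s w = u -> s p = q -> s q = r -> uniq [:: u; v; w; p; q; r] ->
  perm_cover (W :\ v :\ w)
    ((rem2 G v w :\: [set [set p; q]]) :|: [set [set u; p]; [set u; q]])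
    (tperm u w * tperm p w * s)%g.
Proof.
move=> uW pW su sv sw sp sq U y /setD1P[yw /setD1P[yv yW]]; rewrite !permM.
have [-> | yu] := eqVneq y u; first by rewrite tpermL tpermR sp in_setU set22 orbT.
have [-> | yp] := eqVneq y p.
  rewrite [tperm u w p]tpermD ?tpermL ?sw; try by distinct U.
  by rewrite in_setU [[set p; u]]setUC set21 orbT.
rewrite [tperm u w y]tpermD 1?eq_sym // tpermD 1?eq_sym //.
have yR : [set y; s y] \in rem2 G v w.
  by apply: perm_cover_rem2; rewrite // -?su -?sv (inj_eq perm_inj).
rewrite inE; apply/orP; left; rewrite in_setD1 yR andbT.
have [-> | yq] := eqVneq y q; last exact: pair_neq.
by rewrite sq setUC [[set p; q]]setUC pair_neq //; distinct U.
Qed.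

Lemma reduce_triangles_apart u p : u \in W -> p \in W ->
  s (s (s u)) = u -> uniq [:: u; s u; s (s u); p; s p; s (s p)] ->
  [set u; p] \notin G -> [set u; s p] \notin G -> pred_realizable W G.
Proof.
move=> uW pW s3u U upG uqG.
set v := s u in U *; set w := s v in s3u U *; set q := s p in uqG U *; set r := s q in U.
have vW : v \in W := perm_cover_mem uW; have wW : w \in W := perm_cover_mem vW.
have qW : q \in W := perm_cover_mem pW.
have in_W' x : x \in [:: u; p; q] -> x \in W :\ v :\ w.
  by rewrite !inE => /or3P[] /eqP ->; rewrite ?uW ?pW ?qW andbT; apply/andP; split; distinct U.
have [uv uw vw] : [/\ u != v, u != w & v != w] by split; distinct U.
have [up uq pq] : [/\ u != p, u != q & p != q] by split; distinct U.
have uvG : [set u; v] \in G := sE uW.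
have uwG : [set u; w] \in G by rewrite setUC -s3u; apply: sE wW.
have pqG : [set p; q] \in G := sE pW.
have uvw : [set u; v] != [set u; w] by rewrite setUC [[set u; w]]setUC pair_neq //; distinct U.
have upq : [set u; p] != [set u; q] by rewrite setUC [[set u; q]]setUC pair_neq //; distinct U.
apply: (@reduce_by v w [set [set u; v]; [set u; w]] [set [set u; p]; [set u; q]]
  [set [set p; q]] (tperm u w * tperm p w * s)%g) => //; try by distinct U.
- by rewrite subUset !sub1set !inE uvG uwG !eqxx /= !orbT.
- by rewrite deg_set2 // !inE eqxx orbT eq_sym (negbTE uv) (negbTE vw).
- by rewrite deg_set2 // !inE eqxx orbT eq_sym (negbTE uw) eq_sym (negbTE vw).
- exact: simple_graph2.
- move=> e; rewrite !inE => /orP[] /eqP->; apply/subsetP=> x xe; apply: in_W';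
    by move: xe; rewrite !inE => /orP[] /eqP->; rewrite eqxx ?orbT.
- by move=> e; rewrite !inE => /orP[] /eqP->.
- by rewrite sub1set (mem_rem2 pqG) //; distinct U.
- move=> x /setD1P[xw /setD1P[xv _]].
  rewrite !deg_set2 // deg_set1 !inE (negbTE xv) (negbTE xw) !orbF.
  have [-> | _] := eqVneq x u; first by rewrite (negbTE up) (negbTE uq).
  by have [-> | _] := eqVneq x p; rewrite ?(negbTE pq) //=; case: (x == q).
exact: triangles_apart_cover uW pW erefl erefl s3u erefl erefl U.
Qed.

Lemma mem_triangle_perm u x : s (s (s u)) = u ->
  (s x \in [:: u; s u; s (s u)]) = (x \in [:: u; s u; s (s u)]).
Proof. by move=> s3u; rewrite -{1}s3u !inE !(inj_eq perm_inj) orbC -orbA. Qed.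

Lemma triangle_uniq x : x \in W -> s (s x) != x -> uniq [:: x; s x; s (s x)].
Proof.
move=> xW ssx; rewrite /= !inE negb_or perm_cover_neq // eq_sym ssx /=.
by rewrite perm_cover_neq // perm_cover_mem.
Qed.

Lemma reduce_triangles : {in W, forall x, s (s x) != x} ->
  {in W, forall x, s (s (s x)) = x} -> ~~ odd #|W| -> W != set0 -> pred_realizable W G.
Proof.
move=> no2 all3 evW /set0Pn[u uW]; set T := [:: u; s u; s (s u)].
have Tu : uniq T := triangle_uniq uW (no2 u uW).
have disjointT x : x \in W -> x \notin T -> uniq (T ++ [:: x; s x; s (s x)]).
  move=> xW xT; rewrite cat_uniq Tu triangle_uniq ?no2 //= andbT.
  by rewrite !mem_triangle_perm ?all3 // (negbTE xT).
have [p pW pT] : exists2 p, p \in W & p \notin T.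
  have [WT | /subsetPn[p pW pT]] := boolP (W \subset T); last by exists p.
  suff cardW : #|W| = 3 by rewrite cardW in evW.
  apply: etrans (card_uniqP Tu); apply: eq_card => x; apply/idP/idP.
    exact: (subsetP WT).
  by rewrite !inE => /or3P[] /eqP->; rewrite ?uW ?perm_cover_mem.
have qW : s p \in W := perm_cover_mem pW.
have [upG | upG] := boolP ([set u; p] \in G).
  exact: reduce_triangles_edge uW pW (all3 u uW) (all3 p pW) (disjointT p pW pT) upG.
have [uqG | uqG] := boolP ([set u; s p] \in G); last first.
  exact: reduce_triangles_apart uW pW (all3 u uW) (disjointT p pW pT) upG uqG.
have qT : s p \notin T by rewrite mem_triangle_perm ?all3.
exact: reduce_triangles_edge uW qW (all3 u uW) (all3 _ qW) (disjointT _ qW qT) uqG.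
Qed.

End PermCover.

Theorem perm_cover_pred_realizable W G s : simple_graph G -> graph_on W G ->
  perm_cover W G s -> ~~ odd #|W| -> pred_realizable W G.
Proof.
have [k] := ubnP #|W|; elim: k W G s => // k IHk W G s ltW sG oG sE evW.
have IH v w G' s' : v \in W -> w \in W -> v != w ->
    simple_graph G' -> graph_on (W :\ v :\ w) G' -> perm_cover (W :\ v :\ w) G' s' ->
    pred_realizable (W :\ v :\ w) G'.
  move=> vW wW vw sG' oG' sE'; have cardW : #|W| = (#|W :\ v :\ w|).+2.
    by rewrite (cardsD1 v W) vW (cardsD1 w (W :\ v)) !inE eq_sym vw wW.
  apply: (IHk _ _ s' _ sG' oG' sE'); first by move: ltW; rewrite cardW; lia.
  by move: evW; rewrite cardW /= negbK.
have [-> | W0] := eqVneq W set0.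
  by exists set0; split=> [|e|x]; rewrite ?inE //; apply/forall_inP=> e; rewrite inE.
have [x /andP[xW /eqP ssx] | no2] := pickP [pred x in W | s (s x) == x].
  exact: (reduce_2cycle sG oG sE IH xW ssx).
have [u /andP[uW s3u] | all3] := pickP [pred u in W | s (s (s u)) != u].
  apply: (reduce_long_cycle sG oG sE IH uW) s3u => x xW.
  by move: (no2 x); rewrite /= xW => /negbT.
apply: (reduce_triangles sG oG sE IH) => // x xW.
  by move: (no2 x); rewrite /= xW => /negbT.
by move: (all3 x); rewrite /= xW => /negbT; rewrite negbK => /eqP.
Qed.

End Reduction.

Section FractionalCover.
Variables (R : realType) (n : nat).
Implicit Types (E G M : {set {set 'I_n}}) (f : 'I_n -> R).
Local Open Scope ring_scope.

Lemma mu_le E E' : E' \subset E -> tau_star R (E :\: E') < n%:R / 2 ->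
  (mu R E <= #|E'|)%N.
Proof. by move=> EE' tau_lt; apply: (@bigmin_le_cond _ nat); rewrite EE'. Qed.

Lemma mu_gt0 E : (0 < mu R E)%N <-> ~ tau_star R E < n%:R / 2.
Proof.
split=> [mu_pos tau_lt | tau_ge].
  have := mu_le (sub0set E); rewrite setD0 cards0 leqn0 => /(_ tau_lt)/eqP mu0.
  by rewrite mu0 in mu_pos.
apply: (big_ind (fun m => 0 < m)%N) => // [a b|E' /andP[_ tau_lt]].
  by rewrite leq_min => -> ->.
by rewrite card_gt0; apply: contra_notN tau_ge => /eqP E'0; rewrite E'0 setD0 in tau_lt.
Qed.

Lemma mu_bar_gt0 (d : 'I_n -> nat) :
  (0 < mu_bar R d)%N <-> exists2 E, realizes E d & (0 < mu R E)%N.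
Proof.
split=> [|[E rE mu_pos]].
  have [/exists_inP[E rE mu_pos] _ | no_real] :=
    boolP [exists (E : {set {set 'I_n}} | realizes E d), 0 < mu R E]%N.
    by exists E.
  rewrite /mu_bar big1 // => E rE; apply/eqP; rewrite -leqn0 leqNgt.
  by apply: contraNN no_real => mu_pos; apply/exists_inP; exists E.
exact: leq_trans mu_pos (@leq_bigmax_cond _ _ (fun E => mu R E) _ rE).
Qed.

Lemma tau_star_le E f : frac_cover E f -> tau_star R E <= \sum_(v < n) f v.
Proof.
move=> cf; apply: ge_inf; last by exists f.
by exists 0 => _ [g [[g0 _] ->]]; apply: sumr_ge0.
Qed.

Lemma tau_star_ge E b : (forall f, frac_cover E f -> b <= \sum_(v < n) f v) ->
  b <= tau_star R E.
Proof.
move=> h; apply: lb_le_inf; last by move=> _ [f [cf ->]]; apply: h.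
exists (\sum_(v < n) 1), (fun=> 1); split=> //; split=> [v|u v _]; first exact: ler01.
by rewrite -[1 in X in X <= _]addr0 lerD ?ler01.
Qed.

Lemma sumr_indicator (T : finType) (A : {set T}) (P : pred T) :
  \sum_(x in A) ((P x)%:R : R) = #|[set x in A | P x]|%:R.
Proof.
rewrite -sumr_const big_mkcond [RHS]big_mkcond /=; apply: eq_bigr => x _.
by rewrite inE; case: (x \in A); case: (P x).
Qed.

Lemma sumr_mem (A : {set 'I_n}) : \sum_(v < n) ((v \in A)%:R : R) = #|A|%:R.
Proof.
by rewrite -sumr_const [RHS]big_mkcond; apply: eq_bigr => v _; case: (v \in A).
Qed.

Lemma sum_perfect_matching M f : (forall v, deg M v = 1%N) ->
  \sum_(v < n) f v = \sum_(e in M) \sum_(v in e) f v.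
Proof.
move=> dM; transitivity (\sum_(v < n) \sum_(e in M) ((v \in e)%:R * f v)).
  by apply: eq_bigr => v _; rewrite -big_distrl /= sumr_indicator -/(deg M v) dM mul1r.
rewrite exchange_big /=; apply: eq_bigr => e eM; rewrite [RHS]big_mkcond /=.
by apply: eq_bigr => v _; case: (v \in e); rewrite ?mul1r ?mul0r.
Qed.

Lemma perfect_matching_cover_ge G M f : simple_graph M -> M \subset G ->
  (forall v, deg M v = 1%N) -> frac_cover G f -> n%:R / 2 <= \sum_(v < n) f v.
Proof.
move=> /forall_inP sM MG dM [_ cf].
have cardM : (n%:R : R) = 2 * #|M|%:R.
  have := sum_perfect_matching (fun=> 1) dM; rewrite sumr_const card_ord => ->.
  rewrite (eq_bigr (fun=> 2)) ?sumr_const ?mulr_natr // => e /sM /eqP cardE.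
  by rewrite sumr_const cardE.
rewrite cardM mulrC mulKf ?pnatr_eq0 // (sum_perfect_matching f dM) -sumr_const.
apply: ler_sum => e eM; have /cards2P[a [b [ab ee]]] := sM e eM.
rewrite ee big_setU1 ?inE // big_set1; apply: cf.
by rewrite -ee (subsetP MG).
Qed.

Lemma tau_star_perfect_matching G M : simple_graph M -> M \subset G ->
  (forall v, deg M v = 1%N) -> ~ tau_star R G < n%:R / 2.
Proof.
move=> sM MG dM; apply/negP; rewrite -leNgt; apply: tau_star_ge => f.
exact: perfect_matching_cover_ge sM MG dM.
Qed.

Lemma hall_condition_nbhd G : ~ tau_star R G < n%:R / 2 -> hall_condition setT (nbhd G).
Proof.
move=> tau_ge X _; rewrite leqNgt; apply/negP => lt; apply: tau_ge.
set NX := \bigcup_(x in X) nbhd G x.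
(* Every edge at X reaches N(X), so this is a cover of weight (n + |N(X)| - |X|)/2. *)
pose f v : R := (1 + (v \in NX)%:R - (v \in X)%:R) / 2.
have NXP u v : [set u; v] \in G -> u \in X -> v \in NX.
  by move=> uvG uX; apply/bigcupP; exists u; rewrite // inE.
apply: le_lt_trans (@tau_star_le G f _) _.
  split=> [v | u v uvG]; rewrite /f; first by case: (v \in NX); case: (v \in X) => /=; lra.
  have := NXP _ _ uvG; have := NXP v u; rewrite setUC => /(_ uvG).
  by case: (v \in NX); case: (v \in X); case: (u \in NX); case: (u \in X) => //= *; lra.
rewrite /f -mulr_suml big_split /= sumrN big_split /= sumr_const card_ord !sumr_mem.
have : (#|NX|%:R : R) < #|X|%:R by rewrite ltr_nat.
lra.
Qed.

Lemma perm_cover_of_tau_star G : ~ tau_star R G < n%:R / 2 ->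
  exists s : {perm 'I_n}, perm_cover setT G s.
Proof.
move=> /hall_condition_nbhd /hall[f [injf Nf]].
have finj : injective f by move=> x y; apply: injf; rewrite inE.
by exists (perm finj) => x _; have := Nf x (in_setT x); rewrite permE inE.
Qed.

End FractionalCover.

Lemma graphicalZ_subn1 n (d : 'I_n -> nat) :
  graphicalZ (fun v => (d v)%:Z - 1)%R <->
  exists2 H, simple_graph H & forall v, (deg H v).+1 = d v.
Proof.
split=> [[d_pos [H /andP[sH /forallP dH]]] | [H sH dH]].
  exists H => // v; have := d_pos v; rewrite (eqP (dH v)) subr_ge0.
  by case: (d v) => // k _; rewrite -(addn1 k) PoszD addrK addn1.
split=> [v | ]; first by rewrite -dH subr_ge0.
exists H; apply/andP; split=> //; apply/forallP=> v.
by rewrite -dH -addn1 PoszD addrK.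
Qed.

Theorem corollary21 (R : realType) (n : nat) (d : 'I_n -> nat) :
  graphical d -> ~~ odd n ->
  (0 < mu_bar R d)%N <-> graphicalZ (fun v => ((d v)%:Z - 1)%R).
Proof.
move=> [G0 /andP[sG0 /forallP dG0]] n_even; rewrite mu_bar_gt0 graphicalZ_subn1.
split=> [[G /andP[sG /forallP dG] /mu_gt0 /perm_cover_of_tau_star[s cover]] | [H sH dH]].
  have oG : graph_on setT G by move=> e _; apply: subsetT.
  have evT : ~~ odd #|[set: 'I_n]| by rewrite cardsT card_ord.
  have [H [sH _ dH]] := perm_cover_pred_realizable sG oG cover evT.
  by exists H => // v; rewrite dH ?inE ?(eqP (dG v)).
have [|G [H' [sG sH' dG dH' H'G]]] := nested_realizations sG0 sH.
  by move=> v; rewrite (eqP (dG0 v)) dH.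
exists G; first by apply/andP; split=> //; apply/forallP=> v; rewrite dG.
apply/mu_gt0/(tau_star_perfect_matching (simple_graphS (subsetDl _ _) sG) (subsetDl G H')).
by move=> v; have := deg_setD_sub v H'G; rewrite dG dH' (eqP (dG0 v)) -dH; lia.
Qed.
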